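(* Let $T$ be a complete theory and $\mathcal{M}$ a sufficiently saturated model of $T$. The set $\mathcal{SL}_{{\rm acl}_1}(T)$ of all regular operators of the form ${\rm acl}^\Delta_1$ ($\Delta$ a set of formulae), ordered by pointwise inclusion, is a lower semilattice with a least and a greatest element.
   Context: For a set $\Delta$ of formulae $\varphi(x,\overline{y})$ and $A\subseteq M$, ${\rm acl}^\Delta_1(A)$ is the union of the solution sets $\varphi(\mathcal{M},\overline{a})$ over $\varphi\in\Delta$ and tuples $\overline{a}$ from $A$ such that $\varphi(x,\overline{a})$ has at most one solution. An operator ${\rm cl}$ on subsets of $M$ is regular if $A\subseteq{\rm cl}(A)$ and ${\rm cl}({\rm cl}(A))\subseteq{\rm cl}(A)$ for all $A\subseteq M$. Lower semilattice: any two elements have a greatest lower bound. Pointwise inclusion: ${\rm cl}_1\leq{\rm cl}_2$ iff ${\rm cl}_1(A)\subseteq{\rm cl}_2(A)$ for all $A$. *)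

From Stdlib Require Import List Arith.
From Stdlib Require Vectors.Fin.
Import ListNotations.

Set Implicit Arguments.

Record Language := {
  Func : Type;
  Rel : Type;
  farity : Func -> nat;
  rarity : Rel -> nat
}.

Section Syntax.
Variable L : Language.

Inductive term : Type :=
| tvar : nat -> term
| tapp : forall f : Func L, (Fin.t (farity L f) -> term) -> term.

Inductive formula : Type :=
| fEq : term -> term -> formula
| fRel : forall r : Rel L, (Fin.t (rarity L r) -> term) -> formula
| fBot : formula
| fImp : formula -> formula -> formula
| fAll : nat -> formula -> formula.

Definition fNeg (p : formula) : formula := fImp p fBot.

Fixpoint tfree (k : nat) (t : term) : Prop :=
  match t with
  | tvar n => n = k
  | tapp f ts => exists i, tfree k (ts i)
  end.

Fixpoint free (k : nat) (p : formula) : Prop :=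
  match p with
  | fEq t1 t2 => tfree k t1 \/ tfree k t2
  | fRel r ts => exists i, tfree k (ts i)
  | fBot => False
  | fImp a b => free k a \/ free k b
  | fAll n a => n <> k /\ free k a
  end.

Definition sentence (p : formula) : Prop := forall k, ~ free k p.

(** A formula phi(x, y_1, ..., y_n): free variables among 0 (= x) and
    1..n (= y_1..y_n). *)
Record pformula : Type := {
  pf_n : nat;
  pf_f : formula;
  pf_fv : forall k, free k pf_f -> k <= pf_n
}.

End Syntax.

Record structure (L : Language) := {
  dom :> Type;
  dom_elt : dom;  (* structures are non-empty *)
  funs : forall f : Func L, (Fin.t (farity L f) -> dom) -> dom;
  rels : forall r : Rel L, (Fin.t (rarity L r) -> dom) -> Prop
}.

Section Semantics.
Variable L : Language.
Variable M : structure L.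

Fixpoint teval (v : nat -> M) (t : term L) : M :=
  match t with
  | tvar _ n => v n
  | tapp f ts => funs M f (fun i => teval v (ts i))
  end.

Definition upd (v : nat -> M) (n : nat) (m : M) : nat -> M :=
  fun k => if Nat.eqb k n then m else v k.

Fixpoint sat (v : nat -> M) (p : formula L) : Prop :=
  match p with
  | fEq t1 t2 => teval v t1 = teval v t2
  | fRel r ts => rels M r (fun i => teval v (ts i))
  | fBot _ => False
  | fImp a b => sat v a -> sat v b
  | fAll n a => forall m : M, sat (upd v n m) a
  end.

Definition holds (phi : pformula L) (a : list M) (c : M) : Prop :=
  sat (fun k => nth k (c :: a) c) (pf_f phi).

Definition tuple_from (A : M -> Prop) (phi : pformula L) (a : list M) : Prop :=
  length a = pf_n phi /\ Forall A a.

Definition acl1 (Delta : pformula L -> Prop) (A : M -> Prop) : M -> Prop :=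
  fun c => exists phi a,
    Delta phi /\ tuple_from A phi a /\
    (forall c1 c2, holds phi a c1 -> holds phi a c2 -> c1 = c2) /\
    holds phi a c.

Definition operator := (M -> Prop) -> (M -> Prop).

Definition regular (cl : operator) : Prop :=
  (forall A x, A x -> cl A x) /\
  (forall A x, cl (cl A) x -> cl A x).

Definition op_le (cl1 cl2 : operator) : Prop :=
  forall A x, cl1 A x -> cl2 A x.

Definition SL_acl1 (cl : operator) : Prop :=
  exists Delta, cl = acl1 Delta /\ regular cl.

Definition is_lower_semilattice_with_bounds (S : operator -> Prop) : Prop :=
  (forall c1 c2, S c1 -> S c2 ->
     exists g, S g /\ op_le g c1 /\ op_le g c2 /\
       (forall h, S h -> op_le h c1 -> op_le h c2 -> op_le h g)) /\
  (exists b, S b /\ forall h, S h -> op_le b h) /\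
  (exists t, S t /\ forall h, S h -> op_le h t).

Definition ptype_over (A : M -> Prop) (p : pformula L -> list M -> Prop) : Prop :=
  forall phi a, p phi a -> tuple_from A phi a.

Definition fin_satisfiable (p : pformula L -> list M -> Prop) : Prop :=
  forall l : list (pformula L * list M),
    Forall (fun q => p (fst q) (snd q)) l ->
    exists c, Forall (fun q => holds (fst q) (snd q) c) l.

Definition realized (p : pformula L -> list M -> Prop) : Prop :=
  exists c, forall phi a, p phi a -> holds phi a c.

Definition card_lt (A : M -> Prop) (K : Type) : Prop :=
  ~ exists f : K -> {x : M | A x}, forall k1 k2, f k1 = f k2 -> k1 = k2.

Definition saturated (K : Type) : Prop :=
  forall A p, card_lt A K -> ptype_over A p -> fin_satisfiable p -> realized p.

End Semantics.

Definition theory (L : Language) := formula L -> Prop.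

Definition is_theory (L : Language) (T : theory L) : Prop :=
  forall p, T p -> sentence p.

Definition models (L : Language) (M : structure L) (T : theory L) : Prop :=
  forall p v, T p -> sat M v p.

Definition complete_theory (L : Language) (T : theory L) : Prop :=
  is_theory T /\
  (exists N : structure L, models N T) /\
  forall p, sentence p ->
    (forall N : structure L, models N T -> forall v, sat N v p) \/
    (forall N : structure L, models N T -> forall v, sat N v (fNeg p)).

From Stdlib Require Import List Arith Lia Classical FunctionalExtensionality.
Import ListNotations.
Set Implicit Arguments.

(* Write Δ_cl for the formulas φ(x, ȳ) such that, whenever φ(x, ā) has a unique
   solution with ā from A, that solution lies in cl(A); then acl^Δ_1 ≤ cl iff
   Δ ⊆ Δ_cl.  If cl is regular, Δ_cl contains x = y and is closed under
   composition, i.e. under replacing a parameter of φ by the unique solution of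
   some ψ(z, ā).  Conversely acl^Δ_1 is regular as soon as Δ contains x = y and is
   closed under composition: substituting the defining formulas of the parameters
   one at a time turns a unique solution over acl^Δ_1(A) into one over A.  Hence
   acl_1 over Δ_c1 ∩ Δ_c2 is the meet of c1 and c2, acl_1 over {x = y} is the
   identity, and acl_1 over all formulas is the top. *)

Section Renaming.
Variable L : Language.

Fixpoint trename (s : nat -> nat) (t : term L) : term L :=
  match t with
  | tvar _ n => tvar L (s n)
  | tapp f ts => tapp f (fun i => trename s (ts i))
  end.

Fixpoint frename (s : nat -> nat) (p : formula L) : formula L :=
  match p with
  | fEq a b => fEq (trename s a) (trename s b)
  | fRel r ts => fRel r (fun i => trename s (ts i))
  | fBot _ => fBot L
  | fImp a b => fImp (frename s a) (frename s b)
  | fAll n a => fAll (s n) (frename s a)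
  end.

Lemma tfree_rename s (t : term L) k :
  tfree k (trename s t) -> exists j, tfree j t /\ k = s j.
Proof.
  induction t as [n|f ts IH]; simpl.
  - eauto.
  - intros [i Hi]; destruct (IH i Hi) as [j [Hj ->]]; eauto.
Qed.

Lemma free_rename s (s_inj : forall a b, s a = s b -> a = b) (p : formula L) k :
  free k (frename s p) -> exists j, free j p /\ k = s j.
Proof.
  induction p as [a b|r ts| |a IHa b IHb|n a IH]; simpl.
  - intros [H|H]; destruct (tfree_rename _ _ _ H) as [j [? ?]]; eauto.
  - intros [i Hi]; destruct (tfree_rename _ _ _ Hi) as [j [? ?]]; eauto.
  - tauto.
  - intros [H|H]; [destruct (IHa H) as [j [? ?]] | destruct (IHb H) as [j [? ?]]]; eauto.
  - intros [Hn H]; destruct (IH H) as [j [? ->]].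
    exists j; repeat split; auto; intros ->; auto.
Qed.

End Renaming.

Section Semantics.
Variables (L : Language) (M : structure L).

Lemma upd_same (v : nat -> M) n m : upd M v n m n = m.
Proof. unfold upd; now rewrite Nat.eqb_refl. Qed.

Lemma upd_other (v : nat -> M) n m k : k <> n -> upd M v n m k = v k.
Proof. unfold upd; intro; now destruct (Nat.eqb_spec k n). Qed.

Lemma upd_rename s (s_inj : forall a b, s a = s b -> a = b) (v : nat -> M) n m :
  (fun k => upd M v (s n) m (s k)) = upd M (fun k => v (s k)) n m.
Proof.
  apply functional_extensionality; intro k.
  destruct (Nat.eq_dec k n) as [->|Hk]; [now rewrite !upd_same|].
  rewrite !upd_other; auto.
Qed.

Lemma teval_rename s v (t : term L) :
  teval M v (trename s t) = teval M (fun k => v (s k)) t.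
Proof.
  induction t as [n|f ts IH]; simpl; auto.
  now rewrite (functional_extensionality _ _ IH).
Qed.

Lemma sat_rename s (s_inj : forall a b, s a = s b -> a = b) (p : formula L) :
  forall v, sat M v (frename s p) <-> sat M (fun k => v (s k)) p.
Proof.
  induction p as [a b|r ts| |a IHa b IHb|n a IH]; intro v; simpl.
  - now rewrite !teval_rename.
  - now rewrite (functional_extensionality _ _ (fun i => teval_rename s v (ts i))).
  - tauto.
  - now rewrite IHa, IHb.
  - setoid_rewrite IH; now setoid_rewrite (upd_rename _ s_inj).
Qed.

Lemma teval_free (t : term L) v w :
  (forall k, tfree k t -> v k = w k) -> teval M v t = teval M w t.
Proof.
  induction t as [n|f ts IH]; simpl; intro Hvw; auto.
  f_equal; apply functional_extensionality; eauto.
Qed.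

Lemma sat_free (p : formula L) :
  forall v w, (forall k, free k p -> v k = w k) -> (sat M v p <-> sat M w p).
Proof.
  induction p as [a b|r ts| |a IHa b IHb|n a IH]; intros v w Hvw; simpl in *.
  - rewrite (teval_free a v w), (teval_free b v w); auto; tauto.
  - replace (fun i => teval M v (ts i)) with (fun i => teval M w (ts i)); [tauto|].
    apply functional_extensionality; intro i; symmetry; apply teval_free; eauto.
  - tauto.
  - rewrite (IHa v w), (IHb v w); auto; tauto.
  - assert (Hm : forall m, sat M (upd M v n m) a <-> sat M (upd M w n m) a).
    { intro m; apply IH; intros k Hk; unfold upd; destruct (Nat.eqb_spec k n); auto. }
    firstorder.
Qed.

Lemma holds_rename (phi : pformula L) s (s_inj : forall a b, s a = s b -> a = b)
  (v : nat -> M) a c :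
  (forall k, k <= pf_n phi -> v (s k) = nth k (c :: a) c) ->
  sat M v (frename s (pf_f phi)) <-> holds M phi a c.
Proof.
  intro Hv; rewrite sat_rename by auto; unfold holds.
  apply sat_free; intros k Hk; apply Hv, pf_fv; auto.
Qed.

End Semantics.

Local Ltac case_nat := repeat match goal with
  | |- context [?a <=? ?b] => destruct (Nat.leb_spec a b)
  | |- context [?a =? ?b] => destruct (Nat.eqb_spec a b)
  | H : context [?a <=? ?b] |- _ => destruct (Nat.leb_spec a b)
  | H : context [?a =? ?b] |- _ => destruct (Nat.eqb_spec a b)
  end.

Section Composition.
Variable L : Language.

Definition fAnd (a b : formula L) : formula L := fNeg (fImp a (fNeg b)).
Definition fEx (z : nat) (a : formula L) : formula L := fNeg (fAll z (fNeg a)).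

(* [compose phi psi] is  ∃z (ψ(z, ā) ∧ ∀u (ψ(u, ā) → u = z) ∧ φ(x, z, ȳ)),  whose
   parameters are ȳ (the last n - 1 parameters of φ) followed by ā.  With
   N = n - 1 + m, the bound variables z and u are N + 1 and N + 2; variables outside
   the prescribed range are shifted past them so that the renamings stay injective. *)
Definition outer_ren (n m k : nat) : nat :=
  if k =? 0 then 0 else if k =? 1 then S (n - 1 + m)
  else if k <=? n then k - 1 else k + S (n - 1 + m).

Definition inner_ren (n m j k : nat) : nat :=
  if k =? 0 then S (n - 1 + m + j)
  else if k <=? m then n - 1 + k else k + S (n - 1 + m + j).

Lemma outer_ren_inj n m : forall a b, outer_ren n m a = outer_ren n m b -> a = b.
Proof. intros a b; unfold outer_ren; case_nat; lia. Qed.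

Lemma inner_ren_inj n m j : forall a b, inner_ren n m j a = inner_ren n m j b -> a = b.
Proof. intros a b; unfold inner_ren; case_nat; lia. Qed.

Definition compose_f (phi psi : pformula L) : formula L :=
  let n := pf_n phi in let m := pf_n psi in
  let z := S (n - 1 + m) in let u := S z in
  fEx z (fAnd (frename (inner_ren n m 0) (pf_f psi))
          (fAnd (fAll u (fImp (frename (inner_ren n m 1) (pf_f psi))
                              (fEq (tvar L u) (tvar L z))))
                (frename (outer_ren n m) (pf_f phi)))).

Lemma compose_fv (phi psi : pformula L) k :
  free k (compose_f phi psi) -> k <= pf_n phi - 1 + pf_n psi.
Proof.
  unfold compose_f, fEx, fAnd, fNeg; simpl.
  intros H; decompose [and or] H; clear H; try contradiction; try lia;
  match goal with
  | Hf : free _ (frename _ _) |- _ =>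
      apply free_rename in Hf; [|first [apply outer_ren_inj | apply inner_ren_inj]];
      destruct Hf as [j [Hj ->]]; apply pf_fv in Hj
  end;
  repeat match goal with H : _ <> _ |- _ => revert H end;
  unfold outer_ren, inner_ren; case_nat; lia.
Qed.

Definition compose (phi psi : pformula L) : pformula L :=
  {| pf_n := pf_n phi - 1 + pf_n psi;
     pf_f := compose_f phi psi;
     pf_fv := @compose_fv phi psi |}.

End Composition.

Section CompositionSemantics.
Variables (L : Language) (M : structure L).

Lemma sat_fAnd v (a b : formula L) : sat M v (fAnd a b) <-> sat M v a /\ sat M v b.
Proof. unfold fAnd, fNeg; simpl; split; [intro H; apply NNPP; tauto | tauto]. Qed.

Lemma sat_fEx v z (a : formula L) : sat M v (fEx z a) <-> exists m, sat M (upd M v z m) a.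
Proof. unfold fEx, fNeg; simpl; split; [intro H; apply NNPP; firstorder | firstorder]. Qed.

Lemma holds_compose (phi psi : pformula L) (post a : list M) c :
  S (length post) = pf_n phi -> length a = pf_n psi ->
  holds M (compose phi psi) (post ++ a) c <->
  exists z, holds M psi a z /\ (forall u, holds M psi a u -> u = z) /\
            holds M phi (z :: post) c.
Proof.
  intros Hn Hm.
  set (p := length post) in *; set (m := pf_n psi) in *.
  set (v0 := fun k => nth k (c :: post ++ a) c).
  assert (Hparam : forall w k, 0 < k <= m -> v0 (p + k) = nth k (w :: a) w).
  { intros w [|k] Hk; [lia|]; unfold v0.
    rewrite Nat.add_succ_r; simpl; rewrite app_nth2 by lia.
    replace (p + k - length post) with k by lia; apply nth_indep; lia. }
  assert (Hpsi : forall z,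
    sat M (upd M v0 (S (p + m)) z) (frename (inner_ren (pf_n phi) m 0) (pf_f psi)) <->
    holds M psi a z).
  { intro z; apply holds_rename; [apply inner_ren_inj|].
    intros k Hk; unfold inner_ren; replace (pf_n phi - 1) with p by lia; case_nat; try lia.
    - subst k; rewrite Nat.add_0_r; apply upd_same.
    - rewrite upd_other by lia; apply Hparam; lia. }
  assert (Hpsi' : forall z u,
    sat M (upd M (upd M v0 (S (p + m)) z) (S (S (p + m))) u)
          (frename (inner_ren (pf_n phi) m 1) (pf_f psi)) <-> holds M psi a u).
  { intros z u; apply holds_rename; [apply inner_ren_inj|].
    intros k Hk; unfold inner_ren; replace (pf_n phi - 1) with p by lia; case_nat; try lia.
    - subst k; rewrite Nat.add_1_r; apply upd_same.
    - rewrite !upd_other by lia; apply Hparam; lia. }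
  assert (Hphi : forall z,
    sat M (upd M v0 (S (p + m)) z) (frename (outer_ren (pf_n phi) m) (pf_f phi)) <->
    holds M phi (z :: post) c).
  { intro z; apply holds_rename; [apply outer_ren_inj|].
    intros [|[|k]] Hk; unfold outer_ren; replace (pf_n phi - 1) with p by lia; case_nat;
      try lia.
    - rewrite upd_other by lia; reflexivity.
    - apply upd_same.
    - rewrite upd_other by lia; unfold v0; simpl.
      rewrite app_nth1 by lia; reflexivity. }
  assert (Hsol : forall z u,
    teval M (upd M (upd M v0 (S (p + m)) z) (S (S (p + m))) u) (tvar L (S (S (p + m)))) =
    teval M (upd M (upd M v0 (S (p + m)) z) (S (S (p + m))) u) (tvar L (S (p + m))) <-> u = z).
  { intros z u; cbn [teval]; rewrite upd_same, upd_other, upd_same by lia; reflexivity. }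
  unfold holds at 1; cbn [compose pf_f pf_n]; unfold compose_f; fold m v0.
  replace (pf_n phi - 1) with p by lia.
  rewrite sat_fEx; split; intros [z Hz]; exists z; revert Hz;
    rewrite !sat_fAnd, Hpsi, Hphi; cbn [sat];
    setoid_rewrite (Hpsi' z); setoid_rewrite Hsol; tauto.
Qed.

End CompositionSemantics.

Lemma eq_pf_fv (L : Language) k : free k (fEq (tvar L 0) (tvar L 1)) -> k <= 1.
Proof. simpl; lia. Qed.

Definition eq_pf (L : Language) : pformula L :=
  {| pf_n := 1; pf_f := fEq (tvar L 0) (tvar L 1); pf_fv := @eq_pf_fv L |}.

Section Closure.
Variables (L : Language) (M : structure L).

Definition unique_sol (phi : pformula L) (a : list M) : Prop :=
  forall c1 c2, holds M phi a c1 -> holds M phi a c2 -> c1 = c2.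

Definition comp_closed (D : pformula L -> Prop) : Prop :=
  forall phi psi, D phi -> D psi -> 0 < pf_n phi -> D (compose phi psi).

Lemma holds_compose_sol (phi psi : pformula L) (post a : list M) b c :
  S (length post) = pf_n phi -> length a = pf_n psi ->
  holds M psi a b -> unique_sol psi a ->
  holds M (compose phi psi) (post ++ a) c <-> holds M phi (b :: post) c.
Proof.
  intros Hn Hm Hb Hu; rewrite holds_compose by auto; split.
  - intros [z [Hz [_ Hphi]]]; now rewrite (Hu b z).
  - intros Hphi; exists b; split; [|split]; auto.
Qed.

Lemma holds_eq_pf b c : holds M (eq_pf L) [b] c <-> c = b.
Proof. reflexivity. Qed.

Lemma tuple_from_eq_pf (A : M -> Prop) a :
  tuple_from M A (eq_pf L) a -> exists b, a = [b] /\ A b.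
Proof.
  intros [Ha HA]; destruct a as [|b [|]]; simpl in Ha; try lia.
  inversion HA; eauto.
Qed.

Lemma acl1_mono (D1 D2 : pformula L -> Prop) :
  (forall phi, D1 phi -> D2 phi) -> op_le (acl1 M D1) (acl1 M D2).
Proof. intros HD A x [phi [a [? ?]]]; exists phi, a; auto. Qed.

Lemma acl1_extensive (D : pformula L -> Prop) A x : D (eq_pf L) -> A x -> acl1 M D A x.
Proof.
  intros HD Hx; exists (eq_pf L), [x]; repeat split; auto.
  intros c1 c2; rewrite !holds_eq_pf; congruence.
Qed.

Lemma acl1_of_acl1_params (D : pformula L -> Prop) (HD : comp_closed D) A :
  forall post pre phi x, D phi -> Forall (acl1 M D A) post -> Forall A pre ->
  length (post ++ pre) = pf_n phi -> unique_sol phi (post ++ pre) ->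
  holds M phi (post ++ pre) x -> acl1 M D A x.
Proof.
  induction post as [|b post IH]; intros pre phi x Hphi Hpost Hpre Hn Hu Hx.
  - exists phi, pre; repeat split; auto.
  - inversion Hpost as [|? ? Hb Hpost']; subst.
    destruct Hb as [psi [a [Hpsi [[Ha HA] [Hua Hb]]]]].
    rewrite length_app in Hn; simpl in Hn.
    assert (Hcomp : forall c, holds M (compose phi psi) (post ++ pre ++ a) c <->
                              holds M phi (b :: post ++ pre) c).
    { intro c; rewrite app_assoc; apply holds_compose_sol; auto.
      rewrite length_app; lia. }
    apply (IH (pre ++ a) (compose phi psi)); auto.
    + apply HD; auto; lia.
    + apply Forall_app; auto.
    + rewrite !length_app; simpl; lia.
    + intros c1 c2; rewrite !Hcomp; apply Hu.
    + now apply Hcomp.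
Qed.

Lemma acl1_regular (D : pformula L -> Prop) :
  D (eq_pf L) -> comp_closed D -> regular (acl1 M D).
Proof.
  intros Heq HD; split.
  - intros A x; now apply acl1_extensive.
  - intros A x [phi [b [Hphi [[Hb HA] [Hu Hx]]]]].
    apply (@acl1_of_acl1_params D HD A b [] phi); rewrite ?app_nil_r; auto.
Qed.

Definition formulas_of (cl : operator M) (phi : pformula L) : Prop :=
  forall A a c, tuple_from M A phi a -> unique_sol phi a -> holds M phi a c -> cl A c.

Lemma acl1_le_iff (D : pformula L -> Prop) (cl : operator M) :
  op_le (acl1 M D) cl <-> forall phi, D phi -> formulas_of cl phi.
Proof.
  split.
  - intros Hle phi Hphi A a c Ha Hu Hc; apply Hle; exists phi, a; auto.
  - intros HD A x [phi [a [Hphi [Ha [Hu Hx]]]]]; eapply HD; eauto.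
Qed.

Lemma formulas_of_eq_pf (cl : operator M) :
  (forall A x, A x -> cl A x) -> formulas_of cl (eq_pf L).
Proof.
  intros Hext A a c Ha _ Hc; destruct (tuple_from_eq_pf Ha) as [b [-> Hb]].
  rewrite holds_eq_pf in Hc; subst; auto.
Qed.

Lemma formulas_of_comp_closed (cl : operator M) :
  regular cl -> comp_closed (formulas_of cl).
Proof.
  intros [Hext Hidem] phi psi Hphi Hpsi Hn A params c [Hlen HA] Hu Hc.
  set (post := firstn (pf_n phi - 1) params) in *.
  set (a := skipn (pf_n phi - 1) params) in *.
  assert (Eparams : params = post ++ a) by (symmetry; apply firstn_skipn).
  simpl in Hlen.
  assert (Hpost : S (length post) = pf_n phi) by (unfold post; rewrite length_firstn; lia).
  assert (Ha : length a = pf_n psi) by (unfold a; rewrite length_skipn; lia).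
  rewrite Eparams in HA, Hu, Hc; apply Forall_app in HA as [HApost HAa].
  apply holds_compose in Hc as [z [Hz [Hzu Hphiz]]]; auto.
  assert (Hupsi : unique_sol psi a) by (intros u1 u2 H1 H2; rewrite (Hzu u1), (Hzu u2); auto).
  assert (Hzcl : cl A z) by (apply (Hpsi A a z); [split|..]; auto).
  apply Hidem, (Hphi (cl A) (z :: post)); auto.
  - split; [simpl; lia|].
    constructor; auto; eapply Forall_impl; [|exact HApost]; apply Hext.
  - intros c1 c2 H1 H2; apply Hu; apply holds_compose_sol with (b := z); auto.
Qed.

End Closure.

Section Semilattice.
Variables (L : Language) (M : structure L).

Lemma SL_acl1_glb (c1 c2 : operator M) : SL_acl1 c1 -> SL_acl1 c2 ->
  exists g, SL_acl1 g /\ op_le g c1 /\ op_le g c2 /\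
    (forall h, SL_acl1 h -> op_le h c1 -> op_le h c2 -> op_le h g).
Proof.
  intros [D1 [-> R1]] [D2 [-> R2]].
  set (D := fun phi => formulas_of (acl1 M D1) phi /\ formulas_of (acl1 M D2) phi).
  exists (acl1 M D); repeat split.
  - exists D; split; auto; apply acl1_regular.
    + split; apply formulas_of_eq_pf; [apply R1 | apply R2].
    + intros phi psi [] [] Hn; split; apply formulas_of_comp_closed; auto.
  - apply acl1_le_iff; now intros phi [].
  - apply acl1_le_iff; now intros phi [].
  - intros h [Dh [-> _]] H1 H2; rewrite acl1_le_iff in H1, H2.
    apply acl1_mono; intros phi Hphi; split; auto.
Qed.

Lemma SL_acl1_least : exists b : operator M, SL_acl1 b /\ forall h, SL_acl1 h -> op_le b h.
Proof.
  set (D := fun phi => phi = eq_pf L).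
  assert (Hid : op_le (acl1 M D) (fun A => A)).
  { apply acl1_le_iff; intros phi ->; now apply formulas_of_eq_pf. }
  exists (acl1 M D); split.
  - exists D; repeat split.
    + intros A x; now apply acl1_extensive.
    + intros A x Hx; exact (Hid _ _ Hx).
  - intros h [Dh [-> [Hext _]]] A x Hx; exact (Hext _ _ (Hid _ _ Hx)).
Qed.

Lemma SL_acl1_greatest : exists t : operator M, SL_acl1 t /\ forall h, SL_acl1 h -> op_le h t.
Proof.
  exists (acl1 M (fun _ => True)); split.
  - exists (fun _ => True); split; auto; apply acl1_regular; now hnf.
  - intros h [Dh [-> _]]; now apply acl1_mono.
Qed.

End Semilattice.

Theorem mainTheorem8 (L : Language) (T : theory L) (M : structure L) (K : Type)
  (HT : complete_theory T) (HM : models M T)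
  (HK : ~ exists f : K -> formula L, forall k1 k2, f k1 = f k2 -> k1 = k2)
  (Hsat : saturated M K) :
  is_lower_semilattice_with_bounds (@SL_acl1 L M).
Proof.
  split; [|split].
  - exact (@SL_acl1_glb L M).
  - exact (SL_acl1_least M).
  - exact (SL_acl1_greatest M).
Qed.
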